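(* Let $X$ be a Baire space and let $Y$ be a first countable, hereditarily Baire $R_0$-space. Then $X\times Y$ is a Baire space.
   Context: A topological space is a Baire space if every countable intersection of dense open subsets is dense. A space is hereditarily Baire if every nonempty closed subspace is a Baire space. A space is $R_0$ if every open set contains the closure of each of its points. *)

Definition set (T : Type) := T -> Prop.

(* [op] is a topology on T: contains the whole space (and hence, via empty unions,
   the empty set), closed under binary intersections and arbitrary unions. *)
Definition is_topology {T : Type} (op : set T -> Prop) : Prop :=
  op (fun _ => True) /\
  (forall U V, op U -> op V -> op (fun x => U x /\ V x)) /\
  (forall F : set T -> Prop, (forall U, F U -> op U) ->
     op (fun x => exists U, F U /\ U x)).

Definition closed {T : Type} (op : set T -> Prop) (C : set T) : Prop :=
  op (fun x => ~ C x).

Definition dense {T : Type} (op : set T -> Prop) (D : set T) : Prop :=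
  forall U, op U -> (exists x, U x) -> exists x, U x /\ D x.

Definition baire {T : Type} (op : set T -> Prop) : Prop :=
  forall D : nat -> set T, (forall n, op (D n) /\ dense op (D n)) ->
    dense op (fun x => forall n, D n x).

Definition subspace_open {T : Type} (op : set T -> Prop) (C : set T)
  (W : set {x : T | C x}) : Prop :=
  exists U, op U /\ forall z : {x : T | C x}, W z <-> U (proj1_sig z).

Definition hereditarily_baire {T : Type} (op : set T -> Prop) : Prop :=
  forall C : set T, closed op C -> (exists x, C x) -> baire (subspace_open op C).

Definition first_countable {T : Type} (op : set T -> Prop) : Prop :=
  forall x : T, exists B : nat -> set T,
    (forall n, op (B n) /\ B n x) /\
    (forall U, op U -> U x -> exists n, forall y, B n y -> U y).

(* Closure of the singleton {x}: y is in it iff every open nbhd of y contains x. *)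
Definition in_closure_pt {T : Type} (op : set T -> Prop) (x y : T) : Prop :=
  forall V, op V -> V y -> V x.

Definition R0_space {T : Type} (op : set T -> Prop) : Prop :=
  forall U x, op U -> U x -> forall y, in_closure_pt op x y -> U y.

Definition prod_open {X Y : Type} (opX : set X -> Prop) (opY : set Y -> Prop)
  (W : set (X * Y)) : Prop :=
  forall p, W p -> exists U V, opX U /\ opY V /\ U (fst p) /\ V (snd p) /\
    forall q, U (fst q) -> V (snd q) -> W q.

(* Given a nonempty open W inside a product of dense open sets D_n, fix a rectangle
   U0 x V0 in W.  A Banach-Mazur style game in X, which the player aiming at a
   nonempty intersection cannot lose because X is Baire (Oxtoby's construction
   with maximal disjoint families of open sets), yields a point x in U0 and points
   y_j in Y such that every basic neighbourhood of every y_k contains some y_j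
   with (x, y_j) in every prescribed D_n.  In the closure F of {y_j}, each slice
   {y | (x, y) in D_n} is then open and dense; F is Baire, so some y in V0 lies
   in all slices, and (x, y) is in W and in every D_n. *)

From Stdlib Require Import Classical ClassicalEpsilon FunctionalExtensionality
  PropExtensionality Arith Lia Cantor.
From mathcomp Require classical_sets.

Lemma zorn_union (T : Type) (P : set T -> Prop) :
  (forall F : set T -> Prop, (forall A, F A -> P A) ->
     (forall A B, F A -> F B -> (forall x, A x -> B x) \/ (forall x, B x -> A x)) ->
     P (fun x => exists A, F A /\ A x)) ->
  exists A, P A /\ forall B, (forall x, A x -> B x) -> P B -> forall x, B x -> A x.
Proof.
  intros Hchain.
  destruct (@classical_sets.Zorn_bigcup T P) as [A [PA Amax]].
  - intros F FP Ftot. unfold classical_sets.bigcup.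
    replace (fun x => exists2 A, F A & A x) with (fun x => exists A, F A /\ A x).
    + exact (Hchain F FP Ftot).
    + apply functional_extensionality; intro x; apply propositional_extensionality.
      split; [intros [A0 [FA Ax]] | intros [A0 FA Ax]]; exists A0; auto.
  - exists A; split; [exact PA|]. intros B AB PB x Bx.
    apply NNPP; intro nAx. apply (Amax B); [|exact PB].
    split; [exact AB|]. intro BA; exact (nAx (BA x Bx)).
Qed.

Section Topology.
Context {T : Type} (op : set T -> Prop) (top : is_topology op).

Lemma open_of_locally_open (A : set T) :
  (forall x, A x -> exists V, op V /\ V x /\ forall y, V y -> A y) -> op A.
Proof.
  intros Hloc. destruct top as [_ [_ op_union]].
  replace A with (fun x => exists V, (op V /\ forall y, V y -> A y) /\ V x).
  - apply op_union; intros V HV; exact (proj1 HV).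
  - apply functional_extensionality; intro x; apply propositional_extensionality.
    split.
    + intros [V [[_ VA] Vx]]; auto.
    + intros Ax. destruct (Hloc x Ax) as [V [oV [Vx VA]]]. exists V; auto.
Qed.

Lemma open_inter (U V : set T) : op U -> op V -> op (fun x => U x /\ V x).
Proof. apply (proj1 (proj2 top)). Qed.

Definition closure (A : set T) : set T :=
  fun y => forall V, op V -> V y -> exists a, A a /\ V a.

Lemma subset_closure (A : set T) a : A a -> closure A a.
Proof. intros Aa V _ Va; exists a; auto. Qed.

Lemma closed_closure (A : set T) : closed op (closure A).
Proof.
  apply open_of_locally_open; intros y ncl.
  apply not_all_ex_not in ncl as [V ncl].
  apply imply_to_and in ncl as [oV ncl]; apply imply_to_and in ncl as [Vy VA].
  exists V; split; [exact oV|]; split; [exact Vy|].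
  intros z Vz clz. destruct (clz V oV Vz) as [a [Aa Va]]. apply VA; exists a; auto.
Qed.

Lemma dense_in_closure (A S : set T) :
  (forall U, op U -> (exists a, A a /\ U a) -> exists a, A a /\ U a /\ S a) ->
  dense (subspace_open op (closure A)) (fun z => S (proj1_sig z)).
Proof.
  intros HS W [U [oU WU]] [z Wz].
  destruct (HS U oU (proj2_sig z U oU (proj1 (WU z) Wz))) as [b [Ab [Ub Sb]]].
  exists (exist _ b (subset_closure A b Ab)); split; [apply WU; exact Ub|exact Sb].
Qed.

End Topology.

Section ProductTopology.
Context {X Y : Type} (opX : set X -> Prop) (opY : set Y -> Prop).

Lemma prod_open_rect {U : set X} {V : set Y} :
  opX U -> opY V -> prod_open opX opY (fun q => U (fst q) /\ V (snd q)).
Proof.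
  intros oU oV q [Uq Vq]. exists U, V.
  do 4 (split; [assumption|]). intros q' Uq' Vq'; split; assumption.
Qed.

Lemma prod_open_slice (tY : is_topology opY) (W : set (X * Y)) x :
  prod_open opX opY W -> opY (fun y => W (x, y)).
Proof.
  intros oW. apply open_of_locally_open; [exact tY|]. intros y Wxy.
  destruct (oW (x, y) Wxy) as [U [V [_ [oV [Ux [Vy UVW]]]]]].
  exists V; split; [exact oV|]; split; [exact Vy|].
  intros z Vz; apply (UVW (x, z)); assumption.
Qed.

End ProductTopology.

(* Oxtoby: in a Baire space a play can be chosen along the states [St], where a
   state [s] is played onto the open set [O s] and every nonempty open subset of
   [O s] can be answered by a [step]. *)
Section BairePlay.
Variables (X St : Type) (opX : set X -> Prop) (tX : is_topology opX) (hX : baire opX)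
  (O : St -> set X) (step : nat -> St -> St -> Prop) (s0 : St).
Hypotheses (open_root : opX (O s0)) (root_nonempty : exists x, O s0 x)
  (step_refines : forall L s G, opX G -> (exists x, G x) -> (forall x, G x -> O s x) ->
      exists s', step L s s' /\ opX (O s') /\ (exists x, O s' x) /\ (forall x, O s' x -> G x)).

Definition successor L s t :=
  step L s t /\ opX (O t) /\ (exists x, O t x) /\ (forall x, O t x -> O s x).

Definition pairwise_disjoint (A : St -> Prop) :=
  forall t t', A t -> A t' -> t <> t' -> forall x, O t x -> O t' x -> False.

Definition successor_family L s (A : St -> Prop) :=
  (forall t, A t -> successor L s t) /\ pairwise_disjoint A.

Definition maximal_successor_family L s (A : St -> Prop) :=
  successor_family L s A /\
  (opX (O s) -> forall G, opX G -> (exists x, G x /\ O s x) ->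
     exists t, A t /\ exists x, G x /\ O t x).

Lemma maximal_successor_family_exists L s : exists A, maximal_successor_family L s A.
Proof.
  destruct (zorn_union _ (successor_family L s)) as [A [famA Amax]].
  - intros F Ffam Ftot. split.
    + intros t [A [FA At]]. exact (proj1 (Ffam A FA) t At).
    + intros t t' [A [FA At]] [A' [FA' At']] ne x Otx Ot'x.
      destruct (Ftot A A' FA FA') as [AA'|A'A].
      * exact (proj2 (Ffam A' FA') t t' (AA' t At) At' ne x Otx Ot'x).
      * exact (proj2 (Ffam A FA) t t' At (A'A t' At') ne x Otx Ot'x).
  - exists A. split; [exact famA|]. intros oOs G oG [g [Gg Osg]].
    apply NNPP; intro Gfree.
    destruct (step_refines L s (fun x => G x /\ O s x)) as [t [st [oOt [[y Oty] OtG]]]].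
    + apply open_inter; assumption.
    + exists g; auto.
    + intros x [_ Osx]; exact Osx.
    + (* [t] could be added to [A], so by maximality it is already there *)
      assert (At : A t).
      { apply (Amax (fun u => A u \/ u = t)); [intros u Au; auto| |right; reflexivity].
        split.
        - intros u [Au| ->]; [exact (proj1 famA u Au)|].
          repeat split; [exact st|exact oOt|exists y; exact Oty|].
          intros x Otx; exact (proj2 (OtG x Otx)).
        - intros u u' [Au| ->] [Au'| ->] ne x Oux Ou'x.
          + exact (proj2 famA u u' Au Au' ne x Oux Ou'x).
          + apply Gfree. exists u; split; [exact Au|].
            exists x; split; [exact (proj1 (OtG x Ou'x))|exact Oux].
          + apply Gfree. exists u'; split; [exact Au'|].
            exists x; split; [exact (proj1 (OtG x Oux))|exact Ou'x].
          + exact (ne eq_refl). }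
      apply Gfree. exists t; split; [exact At|].
      exists y; split; [exact (proj1 (OtG y Oty))|exact Oty].
Qed.

Definition children L s : St -> Prop :=
  proj1_sig (constructive_indefinite_description _ (maximal_successor_family_exists L s)).

Lemma children_spec L s : maximal_successor_family L s (children L s).
Proof. exact (proj2_sig (constructive_indefinite_description _ _)). Qed.

Fixpoint level (L : nat) : St -> Prop :=
  match L with
  | 0 => fun t => t = s0
  | S L' => fun t => exists s, level L' s /\ children L' s t
  end.

Lemma level_open_nonempty L t :
  level L t -> opX (O t) /\ (exists x, O t x) /\ (forall x, O t x -> O s0 x).
Proof.
  revert t; induction L as [|L IH]; intros t Lt.
  - simpl in Lt; subst; auto.
  - destruct Lt as [s [Ls Cst]].
    destruct (proj1 (proj1 (children_spec L s)) t Cst) as [_ [oOt [neOt OtOs]]].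
    destruct (IH s Ls) as [_ [_ OsO0]]. auto.
Qed.

Lemma level_disjoint L : pairwise_disjoint (level L).
Proof.
  induction L as [|L IH]; intros t t' Lt Lt' ne x Otx Ot'x.
  - simpl in *; subst; auto.
  - destruct Lt as [s [Ls Cst]], Lt' as [s' [Ls' Cs't']].
    destruct (proj1 (proj1 (children_spec L s)) t Cst) as [_ [_ [_ OtOs]]].
    destruct (proj1 (proj1 (children_spec L s')) t' Cs't') as [_ [_ [_ Ot'Os']]].
    destruct (classic (s = s')) as [<-|nss'].
    + exact (proj2 (proj1 (children_spec L s)) t t' Cst Cs't' ne x Otx Ot'x).
    + exact (IH s s' Ls Ls' nss' x (OtOs x Otx) (Ot'Os' x Ot'x)).
Qed.

Lemma level_meets_open L G :
  opX G -> (exists x, G x /\ O s0 x) -> exists t, level L t /\ exists x, G x /\ O t x.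
Proof.
  intros oG; induction L as [|L IH]; intros GO0.
  - exists s0; split; [reflexivity|exact GO0].
  - destruct (IH GO0) as [s [Ls GOs]].
    destruct (proj2 (children_spec L s) (proj1 (level_open_nonempty L s Ls)) G oG GOs)
      as [t [Cst GOt]].
    exists t; split; [exists s; auto|exact GOt].
Qed.

(* The union of level [L] is dense in [O s0]; adding the exterior of [O s0]
   makes it dense everywhere. *)
Definition level_cover L : set X :=
  fun x => (exists t, level L t /\ O t x) \/
           (exists V, opX V /\ (forall y, V y -> ~ O s0 y) /\ V x).

Lemma level_cover_open_dense L : opX (level_cover L) /\ dense opX (level_cover L).
Proof.
  split.
  - apply open_of_locally_open; [exact tX|]. intros x [[t [Lt Otx]]|[V [oV [VO0 Vx]]]].
    + exists (O t); split; [exact (proj1 (level_open_nonempty L t Lt))|].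
      split; [exact Otx|]. intros y Oty; left; exists t; auto.
    + exists V; split; [exact oV|]; split; [exact Vx|].
      intros y Vy; right; exists V; auto.
  - intros G oG [g Gg]. destruct (classic (exists x, G x /\ O s0 x)) as [GO0|GO0].
    + destruct (level_meets_open L G oG GO0) as [t [Lt [x [Gx Otx]]]].
      exists x; split; [exact Gx|]. left; exists t; auto.
    + exists g; split; [exact Gg|]. right; exists G; split; [exact oG|].
      split; [|exact Gg]. intros y Gy O0y; apply GO0; exists y; auto.
Qed.

Theorem baire_play : exists (x : X) (sq : nat -> St),
  sq 0 = s0 /\ (forall L, step L (sq L) (sq (S L))) /\ forall L, O (sq L) x.
Proof.
  destruct (hX level_cover level_cover_open_dense (O s0) open_root root_nonempty)
    as [x [O0x covx]].
  assert (onlevel : forall L, exists t, level L t /\ O t x).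
  { intro L; destruct (covx L) as [Lx|[V [_ [VO0 Vx]]]]; [exact Lx|].
    exfalso; exact (VO0 x Vx O0x). }
  destruct (choice _ onlevel) as [sq Hsq].
  exists x, sq. split; [exact (proj1 (Hsq 0))|]. split; [|intro L; exact (proj2 (Hsq L))].
  intro L. destruct (Hsq (S L)) as [[s [Ls Cs]] OSx].
  destruct (proj1 (proj1 (children_spec L s)) _ Cs) as [st [_ [_ sub]]].
  (* the parent of [sq (S L)] is the unique level-[L] state whose set contains [x] *)
  destruct (classic (s = sq L)) as [<-|nss]; [exact st|].
  exfalso.
  exact (level_disjoint L s (sq L) Ls (proj1 (Hsq L)) nss x (sub x OSx) (proj2 (Hsq L))).
Qed.

End BairePlay.

Definition untriple (L : nat) : nat * nat * nat :=
  (fst (Cantor.of_nat L), fst (Cantor.of_nat (snd (Cantor.of_nat L))),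
   snd (Cantor.of_nat (snd (Cantor.of_nat L)))).

Lemma untriple_surj k n m : exists L, k <= L /\ untriple L = (k, n, m).
Proof.
  exists (Cantor.to_nat (k, Cantor.to_nat (n, m))). split.
  - pose proof (Cantor.to_nat_non_decreasing k (Cantor.to_nat (n, m))); lia.
  - unfold untriple. rewrite Cantor.cancel_of_to; cbn [fst snd].
    rewrite Cantor.cancel_of_to. reflexivity.
Qed.

Section ProductPlay.
Variables (X Y : Type) (opX : set X -> Prop) (opY : set Y -> Prop)
  (tX : is_topology opX) (tY : is_topology opY) (hX : baire opX)
  (B : Y -> nat -> set Y) (D : nat -> set (X * Y)).
Hypotheses (B_open : forall y n, opY (B y n)) (B_center : forall y n, B y n y)
  (B_base : forall y U, opY U -> U y -> exists n, forall z, B y n z -> U z)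
  (D_open : forall n, prod_open opX opY (D n))
  (D_dense : forall n, dense (prod_open opX opY) (D n)).

(* A state is an open set of X together with the points of Y chosen so far;
   move [L] treats the triple (k, n, m) coded by [L]: the new point y_(L+1) is put
   in B (y_k) m and the open set is shrunk until its slice at y_(L+1) lies in D n. *)
Definition play_step (L : nat) (s s' : set X * (nat -> Y)) : Prop :=
  let '(k, n, m) := untriple L in
  (forall j, j <= L -> snd s' j = snd s j) /\
  B (snd s k) m (snd s' (S L)) /\
  forall x, fst s' x -> D n (x, snd s' (S L)).

Lemma play_step_refines L s G : opX G -> (exists x, G x) ->
  exists s', play_step L s s' /\ opX (fst s') /\ (exists x, fst s' x) /\
             (forall x, fst s' x -> G x).
Proof.
  intros oG [g Gg]. unfold play_step. destruct (untriple L) as [[k n] m].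
  set (yk := snd s k).
  destruct (D_dense n (fun q => G (fst q) /\ B yk m (snd q))
              (prod_open_rect opX opY oG (B_open yk m))
              (ex_intro _ (g, yk) (conj Gg (B_center yk m))))
    as [[a b] [[Ga Bb] Dab]].
  destruct (D_open n (a, b) Dab) as [U [V [oU [_ [Ua [Vb UVD]]]]]].
  exists (fun x => G x /\ U x, fun j => if Nat.eqb j (S L) then b else snd s j).
  simpl; rewrite Nat.eqb_refl. repeat split.
  - intros j jL. destruct (Nat.eqb_spec j (S L)); [lia|reflexivity].
  - exact Bb.
  - intros x [_ Ux]; apply (UVD (x, b)); assumption.
  - apply open_inter; assumption.
  - exists a; split; assumption.
  - intros x [Gx _]; exact Gx.
Qed.

Lemma play_exists (U0 : set X) (y0 : Y) : opX U0 -> (exists x, U0 x) ->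
  exists x (ys : nat -> Y), U0 x /\ ys 0 = y0 /\
    forall k n m, exists L, B (ys k) m (ys (S L)) /\ D n (x, ys (S L)).
Proof.
  intros oU0 neU0.
  destruct (baire_play X _ opX tX hX fst play_step (U0, fun _ => y0) oU0 neU0
              (fun L s G oG neG _ => play_step_refines L s G oG neG))
    as [x [sq [sq0 [sqstep sqx]]]].
  set (ys := fun j => snd (sq j) j).
  assert (settled : forall L j, j <= L -> snd (sq L) j = ys j).
  { induction L as [|L IH]; intros j jL.
    - replace j with 0 by lia; reflexivity.
    - destruct (Nat.eq_dec j (S L)) as [->|njL]; [reflexivity|].
      pose proof (sqstep L) as stepL; unfold play_step in stepL.
      destruct (untriple L) as [[k n] m].
      rewrite (proj1 stepL j ltac:(lia)). apply IH; lia. }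
  exists x, ys. split; [generalize (sqx 0); rewrite sq0; auto|].
  split; [unfold ys; rewrite sq0; reflexivity|].
  intros k n m. destruct (untriple_surj k n m) as [L [kL EL]].
  pose proof (sqstep L) as stepL; unfold play_step in stepL; rewrite EL in stepL.
  destruct stepL as [_ [Bk Dn]]. exists L.
  rewrite (settled L k kL) in Bk. split; [exact Bk|]. exact (Dn x (sqx (S L))).
Qed.

Lemma slice_open_dense_in_closure (x : X) (ys : nat -> Y) :
  (forall k n m, exists L, B (ys k) m (ys (S L)) /\ D n (x, ys (S L))) ->
  forall n,
    let F := closure opY (fun y => exists j, ys j = y) in
    subspace_open opY F (fun z => D n (x, proj1_sig z)) /\
    dense (subspace_open opY F) (fun z => D n (x, proj1_sig z)).
Proof.
  intros hits n F; subst F. split.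
  - exists (fun y => D n (x, y)). split; [exact (prod_open_slice opX opY tY _ x (D_open n))|].
    intro z; reflexivity.
  - apply (dense_in_closure opY _ (fun y => D n (x, y))). intros U oU [_ [[k <-] Uyk]].
    destruct (B_base (ys k) U oU Uyk) as [m BU].
    destruct (hits k n m) as [L [Bk Dn]].
    exists (ys (S L)); repeat split; [exists (S L); reflexivity|apply BU; exact Bk|exact Dn].
Qed.

End ProductPlay.

Theorem corollary3p3 (X Y : Type) (opX : set X -> Prop) (opY : set Y -> Prop)
  (tX : is_topology opX) (tY : is_topology opY)
  (hX : baire opX)
  (hY1 : first_countable opY) (hY2 : hereditarily_baire opY) (hY3 : R0_space opY) :
  baire (prod_open opX opY).
Proof.
  destruct (choice _ hY1) as [B HB].
  assert (B_open : forall y n, opY (B y n)) by (intros y n; apply (proj1 (HB y) n)).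
  assert (B_center : forall y n, B y n y) by (intros y n; apply (proj1 (HB y) n)).
  intros D HD W oW [p Wp].
  destruct (oW p Wp) as [U0 [V0 [oU0 [oV0 [U0p [V0p UV0W]]]]]].
  destruct (play_exists X Y opX opY tX hX B D B_open B_center
              (fun n => proj1 (HD n)) (fun n => proj2 (HD n)) U0 (snd p) oU0
              (ex_intro _ _ U0p)) as [x [ys [U0x [ys0 hits]]]].
  set (F := closure opY (fun y => exists j, ys j = y)).
  assert (Fys0 : F (ys 0)) by (apply subset_closure; exists 0; reflexivity).
  destruct (hY2 F (closed_closure opY tY _) (ex_intro _ _ Fys0) _
              (slice_open_dense_in_closure X Y opX opY tY B D (fun y => proj2 (HB y))
                 (fun n => proj1 (HD n)) x ys hits)
              (fun z => V0 (proj1_sig z))) as [[y Fy] [V0y Dxy]].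
  - exists V0; split; [exact oV0|]; intro z; reflexivity.
  - exists (exist _ (ys 0) Fys0); simpl; rewrite ys0; exact V0p.
  - exists (x, y); split; [apply UV0W; assumption|exact Dxy].
Qed.
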